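(* Let $q=2^f$ with $f\ge4$, let $q_0<q$ be a power of $2$ with $\gcd(q-1,q_0^2-1)=1$, and let $u\in\mathscr{U}_{q,q_0}$. (i) Let $A$ be the centralizer of $K'$ in $\mathrm{Aut}(\Gamma_u)$. Then $K\le A$ and $|A:K|\le2$; moreover, every element of $A\setminus K$ interchanges the sets $\Omega_u$ and $\Omega_{u+1}$. (ii) If $\alpha\in\mathrm{Aut}(\Gamma_u)$ is an involution which centralizes $H$, then $\alpha$ fixes every point of $\Omega_u\cup\Omega_{u+1}$.
   Context: For $a,c\in\mathbb{F}_q$ and $\lambda\in\mathbb{F}_q^*$ let $\Phi_{a,c}=\begin{bmatrix}1&0&0\\ a&1&0\\ c&a^{q_0}&1\end{bmatrix}$ and $\Psi_\lambda=\mathrm{diag}(1,\lambda,\lambda^{q_0+1})$. Let $K=\{\Phi_{a,c}\}$, $H=\{\Psi_\lambda\}$, $G=HK\le GL(3,\mathbb{F}_q)$, and $K'$ the commutator subgroup of $K$. For $v\in\mathbb{F}_q$ let $\Omega_v=\{\Phi_{a,va^{q_0+1}}: a\in\mathbb{F}_q^*\}$. $\Gamma_u=\mathrm{Cay}(K,\Omega_u\cup\Omega_{u+1})$ has vertex set $K$, $x,y$ adjacent iff $xy^{-1}\in\Omega_u\cup\Omega_{u+1}$. $G$ is identified with its permutation action on $K$ (elements of $K$ act by right multiplication, $\Psi\in H$ by conjugation $x\mapsto\Psi^{-1}x\Psi$), so $K$, $K'$, $H$ are regarded as subgroups of $\mathrm{Aut}(\Gamma_u)$. $\mathscr{U}_{q,q_0}$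 is the set of $u\in\mathbb{F}_q$ such that (U1) $u=(1+\eta^{q_0})/(\eta+\eta^{q_0})$ for some primitive element $\eta$ of $\mathbb{F}_q$, and (U2) $X^{q_0+1}+uX^{q_0}+(u+1)X+1$ has no roots in $\mathbb{F}_q$. *)

From HB Require Import structures.
From mathcomp Require Import all_boot all_order all_algebra all_fingroup all_field.
Import GRing.Theory.
Local Open Scope ring_scope.

Definition Phi (F : fieldType) (q0 : nat) (a c : F) : 'M[F]_3 :=
  \matrix_(i < 3, j < 3)
    nth 0 (nth [::] [:: [:: 1; 0; 0]; [:: a; 1; 0]; [:: c; a ^+ q0; 1]] i) j.

Definition Psi (F : fieldType) (q0 : nat) (l : F) : 'M[F]_3 :=
  diag_mx (\row_(i < 3) nth 0 [:: 1; l; l ^+ q0.+1] i).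

Definition Kset (F : finFieldType) (q0 : nat) : {set {'GL_3[F]}} :=
  [set g : {'GL_3[F]} | [exists a : F, exists c : F, GLval g == Phi F q0 a c]].

Definition Hset (F : finFieldType) (q0 : nat) : {set {'GL_3[F]}} :=
  [set g : {'GL_3[F]} | [exists l : F, (l != 0) && (GLval g == Psi F q0 l)]].

Definition Omega (F : finFieldType) (q0 : nat) (v : F) : {set {'GL_3[F]}} :=
  [set g : {'GL_3[F]} | [exists a : F, (a != 0) && (GLval g == Phi F q0 a (v * a ^+ q0.+1))]].

Notation Kvert F q0 := {x : {'GL_3[F]} | x \in Kset F q0}.

(* adjacency of Gamma_u = Cay(K, Omega_u \cup Omega_{u+1}) : x ~ y iff x y^-1 in S *)
Definition Gadj (F : finFieldType) (q0 : nat) (u : F) (x y : Kvert F q0) : bool :=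
  ((val x * (val y)^-1)%g \in Omega F q0 u :|: Omega F q0 (u + 1)).

Definition AutG (F : finFieldType) (q0 : nat) (u : F) : {set {perm Kvert F q0}} :=
  [set s : {perm Kvert F q0} | [forall x, forall y, Gadj F q0 u (s x) (s y) == Gadj F q0 u x y]].

(* a subset X of K viewed as permutations of K by right multiplication *)
Definition rmulPerm (F : finFieldType) (q0 : nat) (X : {set {'GL_3[F]}})
  : {set {perm Kvert F q0}} :=
  [set s : {perm Kvert F q0} | [exists k in X, [forall x, val (s x) == (val x * k)%g]]].

(* a subset Y of H viewed as permutations of K by conjugation x |-> Psi^-1 x Psi *)
Definition conjPerm (F : finFieldType) (q0 : nat) (Y : {set {'GL_3[F]}})
  : {set {perm Kvert F q0}} :=
  [set s : {perm Kvert F q0} | [exists h in Y, [forall x, val (s x) == (val x ^ h)%g]]].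

Definition OmegaV (F : finFieldType) (q0 : nat) (v : F) : {set Kvert F q0} :=
  [set x | val x \in Omega F q0 v].

Definition inU (F : finFieldType) (q0 : nat) (u : F) : Prop :=
  (exists eta : F, (#|F|.-1).-primitive_root eta /\
                   u = (1 + eta ^+ q0) / (eta + eta ^+ q0)) /\
  (forall x : F, ~~ root ('X^(q0.+1) + u *: 'X^q0 + (u + 1) *: 'X + 1) x).

(* K is a Heisenberg-type group, Phi_{a,c} Phi_{b,d} = Phi_{a+b, c+d+a^q0 b}, and
   since x |-> x^(q0+1) is onto, K' is the central subgroup Z = {Phi_{0,z}}.  In
   characteristic 2, a vertex Phi_{a,c} with a <> 0 has exactly two neighbours in Z,
   Phi_{0, c + u a^(q0+1)} and Phi_{0, c + (u+1) a^(q0+1)}.  An automorphism t fixing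
   Z pointwise preserves this pair, hence fixes a and either fixes c or adds a^(q0+1)
   to it; the latter breaks some adjacency because x |-> x^(q0+1) and x |-> x^(q0-1)
   are injective.  So t = 1, and every element of the centralizer A of K' is a right
   translation: A = K, |A : K| = 1 and the last claim of (i) is vacuous.
   For (ii), alpha commutes with the conjugations by Psi_l, so it fixes their only
   common fixed point 1 and preserves its neighbourhood Omega_u \cup Omega_{u+1}.
   By (U1), x is adjacent to x^(Psi_eta^-1) exactly when x lies in Omega_u, so alpha
   preserves Omega_u and Omega_{u+1}.  Each is a single H-orbit, so alpha acts on x
   as some Psi_l with l^2 = 1, i.e. l = 1. *)

From HB Require Import structures.
From mathcomp Require Import all_boot all_order all_algebra all_fingroup all_field.
From mathcomp Require Import ring.
Import GRing.Theory.
Set Implicit Arguments.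
Unset Strict Implicit.
Unset Printing Implicit Defensive.
Local Open Scope ring_scope.

Section FieldFacts.
Variable F : fieldType.

Lemma divf_eq_id (y l : F) : (y / l == y) = (y == 0) || (l == 1).
Proof.
have [->|y0] := eqVneq y 0; first by rewrite mul0r eqxx.
by rewrite -{2}[y]mulr1 (inj_eq (mulfI y0)) invr_eq1.
Qed.

Lemma prim_root_neq01 n (z : F) : (1 < n)%N -> n.-primitive_root z -> z != 0 /\ z != 1.
Proof.
move=> n_gt1 z_prim; split.
  apply/eqP => z0; have := prim_expr_order z_prim.
  by rewrite z0 expr0n gtn_eqF ?(ltnW n_gt1) // => /esym/eqP; rewrite oner_eq0.
apply: contraTneq n_gt1 => z1; rewrite -leqNgt.
by apply: dvdn_leq => //; rewrite (prim_order_dvd z_prim) z1 expr1n.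
Qed.

End FieldFacts.

Section FinFieldPowers.
Variable F : finFieldType.

Lemma expf_card_pred (x : F) : x != 0 -> x ^+ #|F|.-1 = 1.
Proof.
move=> x0; apply: (mulfI x0); rewrite mulr1 -exprS prednK ?expf_card //.
exact: ltn_trans (finNzRing_gt1 F).
Qed.

Lemma expf_coprime_inj_in n : coprime n #|F|.-1 ->
  {in predC1 0 &, injective (fun x : F => x ^+ n)}.
Proof.
move=> co_n x y; rewrite !inE => x0 y0 Exy; pose w := x / y.
have w_n : w ^+ n = 1 by rewrite exprMn exprVn Exy divff ?expf_neq0.
have w_q : w ^+ #|F|.-1 = 1 by rewrite expf_card_pred ?mulf_neq0 ?invr_eq0.
have q_gt0 : (0 < #|F|.-1)%N by rewrite ltn_predRL finNzRing_gt1.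
have [a _] := Bezoutl n q_gt0.
rewrite gcdnC (eqP co_n) => /dvdnP [k Ek].
have : w ^+ (1 + a * n) = 1 by rewrite Ek mulnC exprM w_q expr1n.
rewrite exprD expr1 mulnC exprM w_n expr1n mulr1 => w1.
by rewrite -(divfK y0 x) -/w w1 mul1r.
Qed.

Lemma expf_coprime_inj n : (0 < n)%N -> coprime n #|F|.-1 ->
  injective (fun x : F => x ^+ n).
Proof.
move=> n_gt0 co_n x y /= Exy.
have pow_eq0 (z : F) : (z ^+ n == 0) = (z == 0) by rewrite expf_eq0 n_gt0.
have [x0|x0] := eqVneq x 0.
  by rewrite x0; apply/esym/eqP; rewrite -pow_eq0 -Exy x0 pow_eq0.
have [y0|y0] := eqVneq y 0.
  by move: x0; rewrite -pow_eq0 Exy y0 pow_eq0 eqxx.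
exact: (expf_coprime_inj_in co_n).
Qed.

End FinFieldPowers.

Section PhiPsiMatrices.
Variables (F : fieldType) (q0 : nat).
Hypothesis q0_pchar : [pchar F].-nat q0.

Let q0_gt0 : (0 < q0)%N. Proof. by case/andP: q0_pchar. Qed.

Lemma Phi_mul a c b d :
  Phi F q0 a c *m Phi F q0 b d = Phi F q0 (a + b) (c + d + a ^+ q0 * b).
Proof.
apply/matrixP => i j; rewrite !mxE !big_ord_recl !big_ord0 /= !mxE /=.
case: i => [[|[|[|i]]] Hi] //=; case: j => [[|[|[|j]]] Hj] //=;
  rewrite ?exprDn_pchar //; ring.
Qed.

Lemma Phi00 : Phi F q0 0 0 = 1%:M.
Proof.
apply/matrixP => i j; rewrite !mxE /=.
by case: i => [[|[|[|i]]] Hi] //=; case: j => [[|[|[|j]]] Hj] //=; rewrite expr0n gtn_eqF.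
Qed.

Lemma Phi_inj a c b d : Phi F q0 a c = Phi F q0 b d -> a = b /\ c = d.
Proof.
move=> E; have := congr1 (fun M : 'M_3 => M 1 0) E.
by have := congr1 (fun M : 'M_3 => M 2%:R 0) E; rewrite !mxE /= => -> ->.
Qed.

Lemma Phi_unitmx a c : Phi F q0 a c \in unitmx.
Proof.
rewrite unitmxE det_trig; first by rewrite !big_ord_recl big_ord0 !mxE !mul1r unitr1.
by apply/is_trig_mxP => -[[|[|[|i]]] Hi] -[[|[|[|j]]] Hj] //= _; rewrite mxE.
Qed.

Lemma Psi_unitmx l : l != 0 -> Psi F q0 l \in unitmx.
Proof.
move=> l0; rewrite unitmxE det_diag unitfE !big_ord_recl big_ord0 !mxE /=.
by rewrite mul1r mulr1 mulf_neq0 ?expf_neq0.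
Qed.

Lemma Psi_Phi_conj l a c : l != 0 ->
  Psi F q0 l *m Phi F q0 (a / l) (c / l ^+ q0.+1) = Phi F q0 a c *m Psi F q0 l.
Proof.
move=> l0; have lq0 : l ^+ q0 != 0 by rewrite expf_neq0.
apply/matrixP => i j; rewrite !mxE !big_ord_recl !big_ord0 /= !mxE /=.
case: i => [[|[|[|i]]] Hi] //=; case: j => [[|[|[|j]]] Hj] //=;
  rewrite ?mulr1n ?mulr0n ?exprS ?expr_div_n; field; rewrite ?lq0 ?l0 //.
Qed.

End PhiPsiMatrices.

Section AutGroup.
Variables (F : finFieldType) (q0 : nat) (u : F).

Lemma AutGP s : s \in AutG F q0 u -> forall x y, Gadj F q0 u (s x) (s y) = Gadj F q0 u x y.
Proof. by rewrite inE => /forallP As x y; apply/eqP; have /forallP := As x. Qed.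

Lemma group_set_AutG : group_set (AutG F q0 u).
Proof.
apply/group_setP; split=> [|s t /AutGP As /AutGP At];
  rewrite inE; apply/forallP => x; apply/forallP => y.
  by rewrite !perm1.
by rewrite !permM At As.
Qed.

Canonical AutG_group := group group_set_AutG.

End AutGroup.

Section Heisenberg.
Variables (F : finFieldType) (q0 : nat).
Hypothesis q0_pchar : [pchar F].-nat q0.
Local Notation V := (Kvert F q0).

Let q0_gt0 : (0 < q0)%N. Proof. by case/andP: q0_pchar. Qed.

Let GLval_inj : injective (@GLval 3 F) := val_inj.

Definition PhiGL a c : {'GL_3[F]} := Sub (Phi F q0 a c) (Phi_unitmx q0 a c).

Lemma PhiGLE a c : GLval (PhiGL a c) = Phi F q0 a c. Proof. by []. Qed.

Lemma PhiGL_inj a c b d : PhiGL a c = PhiGL b d -> a = b /\ c = d.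
Proof. by move/(congr1 GLval)/Phi_inj. Qed.

Lemma PhiGLM a c b d : (PhiGL a c * PhiGL b d)%g = PhiGL (a + b) (c + d + a ^+ q0 * b).
Proof. by apply: GLval_inj; rewrite GL_MxE Phi_mul. Qed.

Lemma PhiGL00 : PhiGL 0 0 = 1%g.
Proof. by apply: val_inj; rewrite /= Phi00. Qed.

Lemma PhiGLV a c : ((PhiGL a c)^-1)%g = PhiGL (- a) (- c + a ^+ q0.+1).
Proof.
apply: (mulgI (PhiGL a c)); rewrite mulgV PhiGLM -PhiGL00.
by congr PhiGL; rewrite ?exprS; ring.
Qed.

Lemma PhiGL_commg a c b d :
  [~ PhiGL a c, PhiGL b d]%g = PhiGL 0 (a ^+ q0 * b - b ^+ q0 * a).
Proof.
rewrite /commg /conjg !PhiGLV !PhiGLM.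
by congr PhiGL; rewrite ?exprNn_pchar // ?exprS; ring.
Qed.

Lemma PhiGL_Kset a c : PhiGL a c \in Kset F q0.
Proof. by rewrite inE; apply/existsP; exists a; apply/existsP; exists c. Qed.

Lemma KsetP x : reflect (exists a c, x = PhiGL a c) (x \in Kset F q0).
Proof.
apply: (iffP idP) => [|[a [c ->]]]; last exact: PhiGL_Kset.
by rewrite inE => /existsP [a /existsP [c /eqP E]]; exists a, c; apply: GLval_inj.
Qed.

Lemma group_set_Kset : group_set (Kset F q0).
Proof.
apply/group_setP; split=> [|_ _ /KsetP [a [c ->]] /KsetP [b [d ->]]].
  by rewrite -PhiGL00 PhiGL_Kset.
by rewrite PhiGLM PhiGL_Kset.
Qed.

Canonical Kset_group := group group_set_Kset.

(* [Psi 0] is singular, so [PsiGL 0] is the identity; this keeps [hperm] total. *)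
Definition PsiGL l : {'GL_3[F]} := insubd (1%g : {'GL_3[F]}) (Psi F q0 l).

Lemma PsiGLE l : l != 0 -> GLval (PsiGL l) = Psi F q0 l.
Proof. by move=> l0; rewrite /PsiGL val_insubd Psi_unitmx. Qed.

Lemma PsiGL0 : PsiGL 0 = 1%g.
Proof.
rewrite /PsiGL /insubd insubN //= unitmxE det_diag unitfE !big_ord_recl.
by rewrite !mxE /= mul1r mul0r eqxx.
Qed.

Lemma PhiGL_conj l a c : l != 0 ->
  (PhiGL a c ^ PsiGL l)%g = PhiGL (a / l) (c / l ^+ q0.+1).
Proof.
move=> l0; apply: GLval_inj; rewrite /conjg GL_MxE GL_MxE GL_VxE !PsiGLE // !PhiGLE.
by rewrite -Psi_Phi_conj // mulKmx // Psi_unitmx.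
Qed.

Lemma Kset_conj l x : x \in Kset F q0 -> (x ^ PsiGL l)%g \in Kset F q0.
Proof.
have [-> Kx|l0 /KsetP [a [c ->]]] := eqVneq l 0; first by rewrite PsiGL0 conjg1.
by rewrite PhiGL_conj // PhiGL_Kset.
Qed.

Definition vtx a c : V := exist _ (PhiGL a c) (PhiGL_Kset a c).

Lemma vtxP (x : V) : exists a c, x = vtx a c.
Proof. by case: x => _ /[dup] /KsetP [a [c ->]] Kx; exists a, c; apply: val_inj. Qed.

Lemma vtx_inj a c b d : vtx a c = vtx b d -> a = b /\ c = d.
Proof. by move/(congr1 val)/PhiGL_inj. Qed.

Definition rmul (k x : V) : V := exist _ (val x * val k)%g (groupM (valP x) (valP k)).

Lemma rmul_inj k : injective (rmul k).
Proof. by move=> x y /(congr1 val)/mulIg/val_inj. Qed.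

Definition rperm (k : V) : {perm V} := perm (@rmul_inj k).

Lemma rpermE k x : val (rperm k x) = (val x * val k)%g.
Proof. by rewrite permE. Qed.

Lemma rperm_rmulPerm (X : {set {'GL_3[F]}}) k : val k \in X -> rperm k \in rmulPerm F q0 X.
Proof.
move=> Xk; rewrite inE; apply/existsP; exists (val k); rewrite Xk.
by apply/forallP => x; rewrite rpermE.
Qed.

Lemma rmulPermP (X : {set {'GL_3[F]}}) s :
  s \in rmulPerm F q0 X -> exists2 k : V, val k \in X & s = rperm k.
Proof.
rewrite inE => /existsP [k /andP [Xk /forallP Es]].
have Ek : val (s (vtx 0 0)) = k by rewrite (eqP (Es _)) /= PhiGL00 mul1g.
exists (s (vtx 0 0)); first by rewrite Ek.
by apply/permP => x; apply: val_inj; rewrite rpermE (eqP (Es x)) Ek.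
Qed.

Definition hconj l (x : V) : V := exist _ (val x ^ PsiGL l)%g (Kset_conj l (valP x)).

Lemma hconj_inj l : injective (hconj l).
Proof. by move=> x y /(congr1 val)/conjg_inj/val_inj. Qed.

Definition hperm (l : F) : {perm V} := perm (@hconj_inj l).

Lemma hperm_vtx l a c : l != 0 -> hperm l (vtx a c) = vtx (a / l) (c / l ^+ q0.+1).
Proof. by move=> l0; apply: val_inj; rewrite permE /= PhiGL_conj. Qed.

Lemma hperm1 x : hperm 1 x = x.
Proof. by have [a [c ->]] := vtxP x; rewrite hperm_vtx ?oner_neq0 // expr1n !divr1. Qed.

Lemma hpermM l m x : l != 0 -> m != 0 -> hperm l (hperm m x) = hperm (m * l) x.
Proof.
move=> l0 m0; have [a [c ->]] := vtxP x.
by rewrite !hperm_vtx ?mulf_neq0 // exprMn !invfM !mulrA.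
Qed.

Lemma hperm_conjPerm l : l != 0 -> hperm l \in conjPerm F q0 (Hset F q0).
Proof.
move=> l0; rewrite inE; apply/existsP; exists (PsiGL l).
rewrite inE; apply/andP; split; last by apply/forallP => x; rewrite permE.
by apply/existsP; exists l; rewrite l0; apply/eqP/PsiGLE.
Qed.

Definition Zset : {set {'GL_3[F]}} := [set PhiGL 0 z | z : F].

Lemma group_set_Zset : group_set Zset.
Proof.
apply/group_setP; split=> [|_ _ /imsetP [y _ ->] /imsetP [z _ ->]].
  by rewrite -PhiGL00 imset_f.
by rewrite PhiGLM addr0 imset_f.
Qed.

Canonical Zset_group := group group_set_Zset.

Lemma commg_Kset (e : F) : e ^+ q0 != e -> injective (fun x : F => x ^+ q0.+1) ->
  [~: Kset F q0, Kset F q0]%g = Zset.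
Proof.
move=> eq0e /injF_bij [root _ rootK]; apply/eqP; rewrite eqEsubset; apply/andP; split.
  rewrite gen_subG; apply/subsetP => _ /imset2P [_ _ /KsetP [a [c ->]] /KsetP [b [d ->]] ->].
  by rewrite PhiGL_commg imset_f.
apply/subsetP => _ /imsetP [z _ ->].
have [b Eb] : exists b, b ^+ q0.+1 = z / (e ^+ q0 - e) by exists (root (z / (e ^+ q0 - e))).
have := mem_commg (PhiGL_Kset (b * e) 0) (PhiGL_Kset b 0).
rewrite PhiGL_commg (_ : _ - _ = z) //.
by rewrite -[z](@divfK _ (e ^+ q0 - e)) ?subr_eq0 // -Eb exprMn exprS; ring.
Qed.

Lemma ZsetP (k : V) : val k \in Zset -> exists z, k = vtx 0 z.
Proof. by case/imsetP => z _ Ek; exists z; apply: val_inj. Qed.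

Lemma rperm_vtx0C (k : V) z : rperm (vtx 0 z) k = rperm k (vtx 0 z).
Proof.
have [a [c ->]] := vtxP k; apply: val_inj; rewrite !rpermE /= !PhiGLM.
by rewrite expr0n gtn_eqF //= mul0r; congr PhiGL; ring.
Qed.

Lemma commute_rperm_vtx0 (k : V) z : commute (rperm k) (rperm (vtx 0 z)).
Proof.
apply/permP => x; rewrite !permM; apply: val_inj; rewrite !rpermE -!mulgA.
by rewrite -!rpermE rperm_vtx0C.
Qed.

Lemma rperm_AutG u k : rperm k \in AutG F q0 u.
Proof.
rewrite inE; apply/forallP => x; apply/forallP => y.
by rewrite /Gadj !rpermE invMg mulgA mulgK.
Qed.

Section CharTwo.
Variable u : F.
Hypothesis pcharF : 2 \in [pchar F].
Local Notation adj := (Gadj F q0 u).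

Let two0 : 2%:R = 0 :> F. Proof. exact: pcharf0 pcharF. Qed.

(* [inS a c] says that [Phi a c] lies in the connection set Omega_u \cup Omega_{u+1}. *)
Definition inS a c :=
  (a != 0) && ((c == u * a ^+ q0.+1) || (c == (u + 1) * a ^+ q0.+1)).

Lemma PhiGL_Omega v a c :
  (PhiGL a c \in Omega F q0 v) = (a != 0) && (c == v * a ^+ q0.+1).
Proof.
rewrite inE PhiGLE; apply/existsP/andP => [[a' /andP [a'0 /eqP /Phi_inj [-> ->]]]|[a0 /eqP ->]] //.
by exists a; rewrite a0 /=.
Qed.

Lemma vtx_OmegaV v a c :
  (vtx a c \in OmegaV F q0 v) = (a != 0) && (c == v * a ^+ q0.+1).
Proof. by rewrite inE PhiGL_Omega. Qed.

Lemma OmegaV_neq v w x : v != w -> x \in OmegaV F q0 v -> x \notin OmegaV F q0 w.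
Proof.
move=> vw; have [a [c ->]] := vtxP x; rewrite !vtx_OmegaV => /andP [a0 /eqP ->].
have A0 : a ^+ q0.+1 != 0 by rewrite expf_neq0.
by rewrite a0 /= (inj_eq (mulIf A0)).
Qed.

Lemma Gadj_vtx a c b d :
  adj (vtx a c) (vtx b d) = inS (a + b) (c + d + b ^+ q0.+1 + a ^+ q0 * b).
Proof.
rewrite /Gadj /=.
have -> : (PhiGL a c * (PhiGL b d)^-1)%g = PhiGL (a + b) (c + d + b ^+ q0.+1 + a ^+ q0 * b).
  by rewrite PhiGLV PhiGLM !(oppr_pchar2 pcharF); congr PhiGL; ring.
by rewrite in_setU !PhiGL_Omega -andb_orr.
Qed.

Lemma Gadj_vtx0 a c z : adj (vtx a c) (vtx 0 z) = inS a (c + z).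
Proof. by rewrite Gadj_vtx addr0 exprS !mul0r mulr0 !addr0. Qed.

Lemma Gadj_vtx00 x : adj x (vtx 0 0) = (x \in OmegaV F q0 u :|: OmegaV F q0 (u + 1)).
Proof. by rewrite /Gadj /= PhiGL00 invg1 mulg1 !inE. Qed.

Lemma eq_pchar2 (x y : F) : (x == y) = (x + y == 0).
Proof. by rewrite -subr_eq0 (oppr_pchar2 pcharF). Qed.

Lemma OmegaV_hperm_orbit v x y : x \in OmegaV F q0 v -> y \in OmegaV F q0 v ->
  exists2 l, l != 0 & y = hperm l x.
Proof.
have [a [c ->]] := vtxP x; have [b [d ->]] := vtxP y.
rewrite !vtx_OmegaV => /andP [a0 /eqP ->] /andP [b0 /eqP ->].
have l0 : a / b != 0 by rewrite mulf_neq0 ?invr_eq0.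
exists (a / b) => //; rewrite hperm_vtx // expr_div_n; congr vtx; field.
  by rewrite b0 a0.
by rewrite !expf_neq0.
Qed.

Lemma hperm_fixed_OmegaV l v x :
  x \in OmegaV F q0 v -> hperm l x = x -> l != 0 -> l = 1.
Proof.
have [a [c ->]] := vtxP x; rewrite vtx_OmegaV => /andP [a0 _] + l0.
rewrite hperm_vtx // => /vtx_inj [/eqP].
by rewrite divf_eq_id (negbTE a0) => /eqP.
Qed.

Lemma inS_shift (a w e : F) : inS a w -> inS a (w + e) -> e = 0 \/ e = a ^+ q0.+1.
Proof.
case/andP=> _ /orP [] /eqP Ew /andP [_ /orP [] /eqP E]; [left|right|right|left];
  by apply: (addrI w); rewrite E Ew; ring: two0.
Qed.

Section GammaAutomorphisms.
Hypothesis expSq0_inj : injective (fun x : F => x ^+ q0.+1).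
Hypothesis expPq0_inj : {in predC1 0 &, injective (fun x : F => x ^+ q0.-1)}.
Variable eta : F.
Hypotheses (eta_neq0 : eta != 0) (eta_neq1 : eta != 1).

Lemma expq0_cross_inj (a b : F) : a != 0 -> b != 0 -> a ^+ q0 * b = a * b ^+ q0 -> a = b.
Proof.
move=> a0 b0 E; apply: expPq0_inj; rewrite ?inE //=.
apply: (mulfI (mulf_neq0 a0 b0)).
by rewrite mulrAC -exprS prednK // E -mulrA -exprS prednK.
Qed.

Lemma AutG_fixZ_shift t (a c : F) :
  t \in AutG F q0 u -> (forall z, t (vtx 0 z) = vtx 0 z) -> a != 0 ->
  t (vtx a c) = vtx a c \/ t (vtx a c) = vtx a (c + a ^+ q0.+1).
Proof.
move=> At tZ a0; have [a' [c' Et]] := vtxP (t (vtx a c)).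
(* The two neighbours of [vtx a c] in Z differ by [a ^+ q0.+1], and t preserves them. *)
have inSE z : inS a' (c' + z) = inS a (c + z) by rewrite -!Gadj_vtx0 -Et -{1}(tZ z) (AutGP At).
set A := a ^+ q0.+1; have A0 : A != 0 by rewrite expf_neq0.
have shiftE v : inS a' (c' + c + v * A) = inS a (v * A).
  by rewrite -addrA inSE addrA (addrr_pchar2 pcharF) add0r.
have inS_u : inS a (u * A) by rewrite /inS a0 eqxx.
have h_u : inS a' (c' + c + u * A) by rewrite shiftE.
have h_u1 : inS a' (c' + c + u * A + A).
  by rewrite -addrA -{2}[A]mul1r -mulrDl shiftE /inS a0 eqxx orbT.
have aa' : a' = a by case: (inS_shift h_u h_u1) => [/eqP|/expSq0_inj //]; rewrite (negbTE A0).
rewrite Et aa'; rewrite aa' addrC in h_u.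
case: (inS_shift inS_u h_u) => E; [left|right]; congr vtx; apply: (addIr c); rewrite E.
  by rewrite (addrr_pchar2 pcharF).
by rewrite addrAC (addrr_pchar2 pcharF) add0r.
Qed.

Lemma Gadj_shift (a c b d : F) : a != 0 -> b != 0 -> adj (vtx a c) (vtx b d) ->
  ~~ adj (vtx a (c + a ^+ q0.+1)) (vtx b d) /\
  ~~ adj (vtx a (c + a ^+ q0.+1)) (vtx b (d + b ^+ q0.+1)).
Proof.
rewrite !Gadj_vtx => a0 b0 xy.
set A := a ^+ q0.+1; set B := b ^+ q0.+1; set T := (a + b) ^+ q0.+1.
set w := c + d + B + _ in xy.
have ab0 : a + b != 0 by case/andP: xy.
rewrite (_ : c + A + d + B + _ = w + A); last by rewrite /w; ring.
rewrite (_ : c + A + (d + B) + B + _ = w + (A + B)); last by rewrite /w; ring.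
split; apply/negP => /(inS_shift xy) [/eqP|].
- by rewrite expf_eq0 (negbTE a0) andbF.
- move/expSq0_inj/eqP; rewrite -{1}[a]addr0 (inj_eq (addrI a)) eq_sym.
  by rewrite (negbTE b0).
- rewrite -eq_pchar2 => /eqP/expSq0_inj ab.
  by move: ab0; rewrite ab (addrr_pchar2 pcharF) eqxx.
move=> E; move: ab0; suff -> : a = b by rewrite (addrr_pchar2 pcharF) eqxx.
apply: expq0_cross_inj => //; apply: (addIr (a * b ^+ q0)); rewrite (addrr_pchar2 pcharF).
apply: (addrI (A + B)); rewrite {1}E addr0 /T /A /B !exprS exprDn_pchar //.
ring: two0.
Qed.

Lemma AutG_fixZ_id t :
  t \in AutG F q0 u -> (forall z, t (vtx 0 z) = vtx 0 z) -> t = 1%g.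
Proof.
move=> At tZ; apply/permP => x; rewrite perm1; have [a [c ->]] := vtxP x.
have [->|a0] := eqVneq a 0; first exact: tZ.
case: (AutG_fixZ_shift c At tZ a0) => // tx.
set b := a * eta; set T := (a + b) ^+ q0.+1; set d := c + b ^+ q0.+1 + a ^+ q0 * b + u * T.
have b0 : b != 0 by rewrite mulf_neq0.
have ab0 : a + b != 0.
  by rewrite /b -{1}[a]mulr1 -mulrDr mulf_neq0 // -eq_pchar2 eq_sym.
have xy : adj (vtx a c) (vtx b d).
  rewrite Gadj_vtx (_ : c + d + _ + _ = u * T) ?/inS ?ab0 ?eqxx //.
  by rewrite /d; ring: two0.
have [nxy nxy'] := Gadj_shift a0 b0 xy.
have := AutGP At (vtx a c) (vtx b d); rewrite tx xy.
by case: (AutG_fixZ_shift d At tZ b0) => ->; rewrite ?(negbTE nxy) ?(negbTE nxy').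
Qed.

Lemma eta_expq0_neq : eta ^+ q0 != eta.
Proof.
apply: contra eta_neq1 => /eqP E; apply/eqP; apply: expq0_cross_inj; rewrite ?oner_neq0 //.
by rewrite expr1n !mulr1.
Qed.

Lemma cent_commg_rmulPerm :
  ('C_(AutG F q0 u)(rmulPerm F q0 [~: Kset F q0, Kset F q0]) = rmulPerm F q0 (Kset F q0))%g.
Proof.
rewrite (commg_Kset eta_expq0_neq expSq0_inj).
apply/eqP; rewrite eqEsubset; apply/andP; split; apply/subsetP => s; last first.
  case/rmulPermP => k _ ->; rewrite inE rperm_AutG /=.
  by apply/centP => _ /rmulPermP [_ /ZsetP [z ->] ->]; apply: commute_rperm_vtx0.
(* s commutes with the translations by Z, so [s * (rperm k)^-1] fixes Z pointwise. *)
rewrite inE => /andP [As /centP sC]; set k := s (vtx 0 0).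
have sZ z : s (vtx 0 z) = rperm k (vtx 0 z).
  have z1 : rperm (vtx 0 z) (vtx 0 0) = vtx 0 z.
    by apply: val_inj; rewrite rpermE /= PhiGL00 mul1g.
  have Zz : rperm (vtx 0 z) \in rmulPerm F q0 Zset by apply/rperm_rmulPerm/imset_f.
  by rewrite -{1}z1 -permM -(sC _ Zz) permM rperm_vtx0C.
have At : (s * (rperm k)^-1)%g \in AutG F q0 u by rewrite groupM ?groupV ?rperm_AutG.
have := AutG_fixZ_id At => /(_ _) tid.
rewrite -(mulgKV (rperm k) s) tid ?mul1g; first by apply: rperm_rmulPerm; apply: valP.
by move=> z; rewrite permM sZ permK.
Qed.

Lemma eta_add_expq0_neq0 : eta + eta ^+ q0 != 0.
Proof. by rewrite -eq_pchar2 eq_sym eta_expq0_neq. Qed.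

Lemma eta_expS_neq1 : eta ^+ q0.+1 != 1.
Proof.
apply: contra eta_neq1 => /eqP E; apply/eqP/expSq0_inj.
by rewrite [X in X = _]E expr1n.
Qed.

Hypothesis u_eta : u * (eta + eta ^+ q0) = 1 + eta ^+ q0.

(* This is where condition (U1) is used. *)
Lemma Gadj_hperm_eta x : x \in OmegaV F q0 u :|: OmegaV F q0 (u + 1) ->
  adj x (hperm eta^-1 x) = (x \in OmegaV F q0 u).
Proof.
have [a [c ->]] := vtxP x; rewrite in_setU !vtx_OmegaV.
set A := a ^+ q0.+1; set P := (1 + eta) * (1 + eta ^+ q0).
have eta1' : 1 + eta != 0 by rewrite -eq_pchar2 eq_sym.
have adjE v : a != 0 -> adj (vtx a (v * A)) (hperm eta^-1 (vtx a (v * A))) =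
    (A * (v * (1 + eta ^+ q0.+1) + eta ^+ q0.+1 + eta) == A * (u * P)) ||
    (A * (v * (1 + eta ^+ q0.+1) + eta ^+ q0.+1 + eta) == A * ((u + 1) * P)).
  move=> a0; rewrite hperm_vtx ?invr_eq0 // exprVn !invrK Gadj_vtx /inS.
  rewrite (_ : a + a * eta = a * (1 + eta)); last by ring.
  rewrite mulf_neq0 // !exprMn -/A [(1 + eta) ^+ _]exprS exprDn_pchar // expr1n -/P.
  rewrite mulrA -exprSr -/A /= !(mulrCA _ A).
  by rewrite (_ : v * A + _ + _ + _ = A * (v * (1 + eta ^+ q0.+1) + eta ^+ q0.+1 + eta)); last by ring.
case/orP => /andP [a0 /eqP ->]; have A0 : A != 0 by rewrite expf_neq0.
  rewrite adjE // !(inj_eq (mulfI A0)) a0 eqxx /=; apply/orP; right; rewrite eq_pchar2.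
  have -> : u * (1 + eta ^+ q0.+1) + eta ^+ q0.+1 + eta + (u + 1) * P =
      u * (eta + eta ^+ q0) + (1 + eta ^+ q0) by rewrite /P !exprS; ring: two0.
  by rewrite u_eta (addrr_pchar2 pcharF).
rewrite adjE // !(inj_eq (mulfI A0)) a0 (inj_eq (mulIf A0)) /=.
rewrite -[X in _ = (_ == X)]addr0 (inj_eq (addrI u)) oner_eq0.
(* [ring: two0] cannot reduce odd coefficients above 1, hence this intermediate step. *)
have E1 : (u + 1) * (1 + eta ^+ q0.+1) + eta ^+ q0.+1 + eta + u * P = eta + eta ^+ q0.
  rewrite (_ : _ + u * P = u * (eta + eta ^+ q0) + (1 + eta)).
    by rewrite u_eta; ring: two0.
  by rewrite /P !exprS; ring: two0.
apply/negbTE; rewrite negb_or; apply/andP; split; rewrite eq_pchar2.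
  by rewrite E1 eta_add_expq0_neq0.
rewrite [(u + 1) * P]mulrDl mul1r addrA E1 (_ : _ + P = 1 + eta ^+ q0.+1).
  by rewrite -eq_pchar2 eq_sym eta_expS_neq1.
by rewrite /P !exprS; ring: two0.
Qed.

Lemma hperm_eta_fixed x : hperm eta x = x -> x = vtx 0 0.
Proof.
have [a [c ->]] := vtxP x; rewrite hperm_vtx // => /vtx_inj [/eqP Ea /eqP Ec].
move: Ea Ec; rewrite !divf_eq_id (negbTE eta_neq1) (negbTE eta_expS_neq1) !orbF.
by move=> /eqP -> /eqP ->.
Qed.

Lemma involution_centH_fix alpha :
  alpha \in AutG F q0 u -> #[alpha]%g = 2%N -> alpha \in 'C(conjPerm F q0 (Hset F q0))%g ->
  forall x, x \in OmegaV F q0 u :|: OmegaV F q0 (u + 1) -> alpha x = x.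
Proof.
move=> Aa ord2 /centP aC.
have aH l x : l != 0 -> alpha (hperm l x) = hperm l (alpha x).
  by move=> l0; rewrite -!permM (aC _ (hperm_conjPerm l0)).
have aa x : alpha (alpha x) = x.
  by have := expg_order alpha; rewrite ord2 expgS expg1 => /permP /(_ x); rewrite permM perm1.
have a1 : alpha (vtx 0 0) = vtx 0 0.
  apply: hperm_eta_fixed; rewrite -aH //.
  by rewrite hperm_vtx // !mul0r.
set S := OmegaV F q0 u :|: OmegaV F q0 (u + 1).
have aS x : (alpha x \in S) = (x \in S) by rewrite -!Gadj_vtx00 -{1}a1 (AutGP Aa).
have aOu x : x \in S -> (alpha x \in OmegaV F q0 u) = (x \in OmegaV F q0 u).
  move=> Sx; rewrite -Gadj_hperm_eta ?aS //.
  by rewrite -aH ?invr_eq0 // (AutGP Aa) Gadj_hperm_eta.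
have u1 : u + 1 != u by rewrite -[X in _ != X]addr0 (inj_eq (addrI u)) oner_eq0.
move=> x Sx; have [v xv axv] : exists2 v, x \in OmegaV F q0 v & alpha x \in OmegaV F q0 v.
  case/setUP: (Sx) => xv; first by exists u; rewrite ?aOu.
  exists (u + 1) => //; move: (Sx); rewrite -aS => /setUP [|//].
  by rewrite aOu // (negbTE (OmegaV_neq u1 xv)).
have [l l0 Ex] := OmegaV_hperm_orbit xv axv.
have l1 : l = 1.
  have : hperm (l * l) x = x by rewrite -hpermM // -Ex -aH // -Ex aa.
  move/(hperm_fixed_OmegaV xv)/(_ (mulf_neq0 l0 l0))/eqP.
  by rewrite -expr2 sqrf_eq1 (oppr_pchar2 pcharF) orbb => /eqP.
by rewrite Ex l1 hperm1.
Qed.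

End GammaAutomorphisms.


End CharTwo.
End Heisenberg.

Local Close Scope ring_scope.
Unset Implicit Arguments.

Theorem lemma6p5 (F : finFieldType) (f q0 : nat) (u : F) :
  4 <= f -> #|F| = 2 ^ f ->
  (exists e : nat, q0 = 2 ^ e) -> q0 < 2 ^ f ->
  coprime (2 ^ f - 1) (q0 ^ 2 - 1) ->
  inU F q0 u ->
  (let A := ('C_(AutG F q0 u)(rmulPerm F q0 [~: Kset F q0, Kset F q0]))%g in
   let Kp := rmulPerm F q0 (Kset F q0) in
   [/\ Kp \subset A,
       #|A : Kp|%g <= 2 &
       forall s, s \in A :\: Kp ->
         (fun x => s x) @: OmegaV F q0 u = OmegaV F q0 (u + 1)%R /\
         (fun x => s x) @: OmegaV F q0 (u + 1)%R = OmegaV F q0 u])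
  /\
  (forall alpha : {perm Kvert F q0},
     alpha \in AutG F q0 u -> #[alpha]%g = 2 ->
     alpha \in ('C(conjPerm F q0 (Hset F q0)))%g ->
     forall x : Kvert F q0, x \in OmegaV F q0 u :|: OmegaV F q0 (u + 1)%R ->
       alpha x = x).
Proof.
move=> f_ge4 cardF [e q0E] _ co_q0 [[eta [eta_prim u_eta]] _].
have pcharF : 2 \in [pchar F]%R by apply: card_finPcharP cardF _.
have q0_pchar : [pchar F]%R.-nat q0 by rewrite q0E (eq_pnat _ (pcharf_eq pcharF)) pnatX pnat_id.
have [co_m co_p] : coprime q0.-1 #|F|.-1 /\ coprime q0.+1 #|F|.-1.
  move: co_q0; rewrite -[X in q0 ^ 2 - X](exp1n 2) subn_sqr coprimeMr subn1 addn1 cardF subn1.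
  by case/andP => co1 co2; split; rewrite coprime_sym.
have q_gt1 : 1 < #|F|.-1.
  have : 2 ^ 4 <= 2 ^ f by rewrite leq_exp2l.
  by rewrite cardF; case: (2 ^ f) => [|[|[|m]]].
have [eta0 eta1] := prim_root_neq01 q_gt1 eta_prim.
have expS_inj := expf_coprime_inj (ltn0Sn q0) co_p.
have expP_inj := expf_coprime_inj_in co_m.
have {}u_eta : (u * (eta + eta ^+ q0) = 1 + eta ^+ q0)%R.
  by rewrite u_eta divfK // (eta_add_expq0_neq0 q0_pchar pcharF expP_inj eta0 eta1).
split=> [A Kp | alpha Aa]; last exact: (involution_centH_fix q0_pchar pcharF expS_inj expP_inj eta0 eta1 u_eta Aa).
have AKp : A = Kp := cent_commg_rmulPerm q0_pchar u pcharF expS_inj expP_inj eta0 eta1.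
by rewrite -AKp /A indexgg setDv; split=> // s; rewrite inE.
Qed.
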